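(* Let $\mathcal{G}=(\mathcal{V},\mathcal{E})$ be a directed graph with $n$ nodes, $m$ edges and terminals $s,t$, let $f:2^{\mathcal{E}}\to\mathbb{R}_+$ be normalized, monotone nondecreasing and submodular with Lovász extension $\tilde f$, and let $C^*$ be an $(s,t)$-cut minimizing $f$. Let $(x^*,y^* )$ be an optimal solution of the relaxation $$\min_{y\in\mathbb{R}^{\mathcal{E}},x\in\mathbb{R}^{\mathcal{V}}}\tilde f(y)\ \text{ s.t. } -x(u)+x(v)+y(e)\ge 0\ \forall e=(u,v)\in\mathcal{E},\ x(s)-x(t)\ge1,\ y\ge0,$$ with $x^*\in[0,1]^n$, $y^*\in[0,1]^m$. Order the edges so that $y^*(e_1)\ge\dots\ge y^*(e_m)$; for $i=1,\dots,m$ let $C_i=\{e_j: y^*(e_j)\ge y^*(e_i)\}$, and at the first $i$ for which $C_i$ is an $(s,t)$-cut, prune $C_i$ to a minimal $(s,t)$-cut $\widehat C\subseteq C_i$ and return it; let $\theta=y^*(e_i)$ for this $i$. Then $$f(\widehat C)\le\frac1\theta f(C^* )\le |P_{\max}|\,f(C^* )\le (n-1)f(C^* ),$$ where $P_{\max}$ is a longest simple $(s,t)$-path in $\mathcal{G}$ and $|P_{\max}|$ its number of edges.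
   Context: An $(s,t)$-cut is a set of edges whose removal disconnects all $s$-$t$ paths; it is minimal if no proper subset is a cut. The Lovász extension: for $x\in[0,1]^m$ written uniquely as $x=\sum_j\lambda_j\chi_{B_j}$ with $\lambda_j>0$ and nested level sets $B_1\subset B_2\subset\cdots$, $\tilde f(x)=\sum_j\lambda_j f(B_j)$, where $\chi_B$ is the indicator vector of $B$. *)

From mathcomp Require Import all_boot all_order all_algebra.
Set Implicit Arguments. Unset Strict Implicit. Unset Printing Implicit Defensive.
Import Order.TTheory GRing.Theory Num.Theory.
Local Open Scope ring_scope.

Section Graph.
Variables (V E : finType) (src dst : E -> V).

Fixpoint is_walk (u w : V) (p : seq E) : bool :=
  match p with
  | [::] => u == w
  | e :: p' => (src e == u) && is_walk (dst e) w p'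
  end.

Definition walk_vertices (u : V) (p : seq E) : seq V := u :: map dst p.

Definition simple_path (u w : V) (p : seq E) : bool :=
  is_walk u w p && uniq (walk_vertices u p).

Definition is_st_cut (s t : V) (C : {set E}) : Prop :=
  forall p, simple_path s t p -> has (fun e => e \in C) p.

Definition is_min_st_cut (s t : V) (C : {set E}) : Prop :=
  is_st_cut s t C /\ forall D : {set E}, D \proper C -> ~ is_st_cut s t D.

Definition is_longest_st_path (s t : V) (P : seq E) : Prop :=
  simple_path s t P /\ forall Q, simple_path s t Q -> (size Q <= size P)%N.

End Graph.

Section SetFun.
Variables (R : realFieldType) (E : finType) (f : {set E} -> R).

Definition normalized := f set0 = 0.
Definition nonneg_setfun := forall A, 0 <= f A.
Definition monotone_setfun := forall A B : {set E}, A \subset B -> f A <= f B.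
Definition submodular := forall A B : {set E}, f (A :|: B) + f (A :&: B) <= f A + f B.

(* next lower level of y below v (0 if none): v_{j+1} for v = v_j *)
Definition lower_level (y : E -> R) (v : R) : R :=
  \big[Num.max/0]_(e | y e < v) y e.

(* Lovász extension: writing y = sum_j (v_j - v_{j+1}) chi_{B_j} where
   v_1 > v_2 > ... > v_k > 0 are the distinct positive values of y,
   v_{k+1} = 0 and B_j = {e | y e >= v_j}. *)
Definition lovasz (y : E -> R) : R :=
  \sum_(v <- undup [seq y e | e <- enum E] | 0 < v)
     (v - lower_level y v) * f [set e | v <= y e].

End SetFun.

Definition relax_feasible (R : realFieldType) (V E : finType) (src dst : E -> V)
  (s t : V) (x : V -> R) (y : E -> R) : Prop :=
  (forall e, - x (src e) + x (dst e) + y e >= 0) /\ x s - x t >= 1 /\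
  (forall e, 0 <= y e).

From mathcomp Require Import all_boot all_order all_algebra.
From mathcomp Require Import lra zify.
From Stdlib Require Import Classical.
Set Implicit Arguments. Unset Strict Implicit. Unset Printing Implicit Defensive.
Import Order.TTheory GRing.Theory Num.Theory.
Local Open Scope ring_scope.

(* Every (s,t)-cut C yields a feasible point of the relaxation: the indicator of C together
   with the indicator of the nodes reachable from s without using C.  Its Lovasz value is
   f C, so the optimum is at most f C*.  The Lovasz extension of y* dominates
   theta * f {e | theta <= y* e}, a level set containing Chat, whence f Chat <= f C* / theta.
   Summing the edge constraints along a simple s-t path P gives sum_(e in P) y* e >= 1, so P
   has an edge with y* e >= 1 / |P|; hence {e | 1 / |P_max| <= y* e} is a cut and the first
   cut of the sweep has theta >= 1 / |P_max|.  Finally a simple path has at most n - 1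
   edges. *)

Section LovaszLevels.
Variables (R : realFieldType) (E : finType) (f : {set E} -> R) (y : E -> R).

Local Notation values := (undup [seq y e | e <- enum E]).
Local Notation lw := (lower_level y).
Local Notation level v := [set e | v <= y e].

Lemma mem_values e : y e \in values.
Proof. by rewrite mem_undup map_f ?mem_enum. Qed.

Lemma lower_level_lt w : 0 < w -> 0 <= lw w < w.
Proof.
move=> w_gt0; rewrite /lower_level; elim/big_rec: _ => [|e x /= lt_ew].
  by rewrite lexx.
by case/andP=> x_ge0 lt_xw; rewrite le_max x_ge0 orbT gt_max lt_ew.
Qed.

Lemma lower_level_ge e w : y e < w -> y e <= lw w.
Proof. by move=> lt_ew; rewrite /lower_level (bigD1 e) //= le_max lexx. Qed.

Lemma lower_level_values w : lw w != 0 -> lw w \in values.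
Proof.
rewrite /lower_level; elim/big_rec: _ => [|e x _ IH]; first by rewrite eqxx.
by case: leP => _ nz; [apply: IH | apply: mem_values].
Qed.

Definition level_sum w := \sum_(v <- values | 0 < v <= w) (v - lw v) * f (level v).

Lemma level_sum0 : level_sum 0 = 0.
Proof. by rewrite /level_sum big1 // => v /andP[/lt_le_trans lt_v0 /lt_v0]; rewrite ltxx. Qed.

Lemma level_sum_step w : w \in values -> 0 < w ->
  level_sum w = (w - lw w) * f (level w) + level_sum (lw w).
Proof.
move=> wv w_gt0; have /andP[_ lt_lw] := lower_level_lt w_gt0.
rewrite /level_sum (big_rem w) //= w_gt0 lexx; congr (_ + _).
rewrite [RHS](big_rem w) //= [w <= lw w]leNgt lt_lw andbF add0r.
rewrite big_seq_cond [RHS]big_seq_cond; apply: eq_bigl => v.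
case: (boolP (v \in rem w _)) => //=.
rewrite mem_rem_uniq ?undup_uniq // inE mem_undup.
case/andP=> ew /mapP[e _ ev]; rewrite {v}ev in ew *; case: (0 < y e) => //=.
apply/idP/idP => [le_ew | le_e_lw]; last exact: le_trans (ltW lt_lw).
by apply: lower_level_ge; rewrite lt_neqAle ew.
Qed.

Hypotheses (f_nonneg : nonneg_setfun f) (f_mono : monotone_setfun f).

(* The increments [v - lower_level y v] over the levels [0 < v <= w] telescope to [w], and
   [f] is largest on the lowest of these level sets. *)
Lemma level_sum_ge w : w \in values -> 0 < w -> w * f (level w) <= level_sum w.
Proof.
have [n] := ubnP #|[set e | y e < w]|; elim: n w => // n IH w card_lt wv w_gt0.
have /andP[lw_ge0 lt_lw] := lower_level_lt w_gt0.
have IHlw : lw w * f (level (lw w)) <= level_sum (lw w).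
  have [->|lw_nz] := eqVneq (lw w) 0; first by rewrite level_sum0 mul0r.
  have lw_val := lower_level_values lw_nz.
  apply: IH => //; last by rewrite lt_def lw_nz.
  rewrite -ltnS (leq_trans _ card_lt) // ltnS; apply/proper_card/properP; split.
    by apply/subsetP => e; rewrite !inE => /lt_trans; apply.
  move: lw_val; rewrite mem_undup => /mapP[e _ lw_e].
  by exists e; rewrite !inE -lw_e ?lt_lw ?ltxx.
have mono : f (level w) <= f (level (lw w)).
  by apply: f_mono; apply/subsetP => e; rewrite !inE; apply: le_trans (ltW lt_lw).
rewrite level_sum_step // -[w in w * _](subrK (lw w)) mulrDl lerD2l.
by apply: le_trans IHlw; apply: ler_wpM2l.
Qed.

Lemma level_sum_le_lovasz w : level_sum w <= lovasz f y.
Proof.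
rewrite /lovasz (bigID (fun v => v <= w)) /= lerDl.
apply: sumr_ge0 => v /andP[v_gt0 _]; apply: mulr_ge0 => //.
by have /andP[_ /ltW] := lower_level_lt v_gt0; rewrite subr_ge0.
Qed.

Lemma lovasz_level_le e : 0 < y e -> y e * f (level (y e)) <= lovasz f y.
Proof.
move=> ye_gt0; apply: le_trans (level_sum_le_lovasz (y e)).
by apply: level_sum_ge; rewrite ?mem_values.
Qed.

End LovaszLevels.

Lemma lovasz_indicator (R : realFieldType) (E : finType) (f : {set E} -> R) (C : {set E}) :
  normalized f -> lovasz f (fun e => (e \in C)%:R) = f C.
Proof.
move=> f0; rewrite /lovasz; have [-> | [e eC]] := set_0Vmem C.
  rewrite big_seq_cond big1 // => v /andP[]; rewrite mem_undup => /mapP[e _ ->].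
  by rewrite in_set0 ltxx.
set chi := fun e => _.
have chi01 v : v \in undup [seq chi e | e <- enum E] -> v = 0 \/ v = 1.
  by rewrite mem_undup => /mapP[e' _ ->]; rewrite /chi; case: (e' \in C); [right|left].
have one_val : 1 \in undup [seq chi e | e <- enum E] by have := mem_values chi e; rewrite /chi eC.
rewrite (big_rem 1) //= ltr01 big_seq_cond big1 ?addr0; last first.
  move=> v /andP[]; rewrite mem_rem_uniq ?undup_uniq // inE.
  case/andP=> v1 /chi01[] v_eq; first by rewrite v_eq ltxx.
  by rewrite v_eq eqxx in v1.
have -> : lower_level chi 1 = 0.
  rewrite /lower_level; elim/big_rec: _ => // e' x lt_e'1 ->.
  by case: (chi01 _ (mem_values _ e')) lt_e'1 => ->; rewrite ?maxxx ?ltxx.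
rewrite subr0 mul1r; congr f; apply/setP => e'.
by rewrite inE /chi; case: (e' \in C); rewrite ?lexx ?ler10.
Qed.

Section Graph.
Variables (V E : finType) (src dst : E -> V).

Section CutReachability.
Variable C : {set E}.

Definition adj_avoiding : rel V :=
  fun a b => [exists e, [&& e \notin C, src e == a & dst e == b]].

Fixpoint edges_along (u : V) (p : seq V) : seq E :=
  if p is w :: p' then
    if [pick e | [&& e \notin C, src e == u & dst e == w]] is Some e
    then e :: edges_along w p' else [::]
  else [::].

Lemma edges_alongP u p : path adj_avoiding u p ->
  [&& is_walk src dst u (last u p) (edges_along u p),
      map dst (edges_along u p) == p & all (fun e => e \notin C) (edges_along u p)].
Proof.
elim: p u => [|w p IH] u /=; first by rewrite eqxx.
case/andP=> /existsP[e0 He0] /IH /and3P[walk_p /eqP dst_p avoid_p].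
case: pickP => [e /and3P[eNC /eqP src_e /eqP dst_e] | /(_ e0)]; last by rewrite He0.
by rewrite /= src_e dst_e eqxx walk_p eNC avoid_p dst_p eqxx.
Qed.

Lemma st_cut_disconnects s t : is_st_cut src dst s t C -> ~~ connect adj_avoiding s t.
Proof.
move=> cut; apply/negP => /connectP[p /shortenP[p' p'_path p'_uniq _] t_last].
have /and3P[walk_p' /eqP dst_p' avoid_p'] := edges_alongP p'_path.
have /hasP[e e_p' eC] : has (fun e => e \in C) (edges_along s p').
  by apply: cut; rewrite /simple_path t_last walk_p' /walk_vertices dst_p' p'_uniq.
by move: (allP avoid_p' e e_p'); rewrite eC.
Qed.

Lemma st_cut_relax_feasible (R : realFieldType) s t : is_st_cut src dst s t C ->
  relax_feasible src dst s t
    (fun v => (connect adj_avoiding s v)%:R : R) (fun e => (e \in C)%:R).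
Proof.
move=> cut; split; [|split] => [e||e]; last by rewrite ler0n.
- have [eC|eNC] := boolP (e \in C).
    by case: connect; case: connect; rewrite /=; lra.
  have [reach_src|_] := boolP (connect adj_avoiding s (src e)).
    have -> : connect adj_avoiding s (dst e).
      by apply: connect_trans reach_src (connect1 _); apply/existsP; exists e; rewrite eNC !eqxx.
    by rewrite /=; lra.
  by case: connect; rewrite /=; lra.
- by rewrite connect0 (negbTE (st_cut_disconnects cut)) /=; lra.
Qed.
End CutReachability.

Lemma st_cut_superset s t (C D : {set E}) :
  is_st_cut src dst s t C -> C \subset D -> is_st_cut src dst s t D.
Proof. by move=> cut /subsetP CD p /cut /hasP[e e_p /CD eD]; apply/hasP; exists e. Qed.

Lemma simple_path_size_lt s t p : simple_path src dst s t p -> (size p < #|V|)%N.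
Proof.
case/andP=> _ /card_uniqP card_p; have := max_card (mem (walk_vertices dst s p)).
by rewrite card_p /walk_vertices /= size_map.
Qed.

Section WalkPotential.
Variables (R : realFieldType) (x : V -> R) (y : E -> R).
Hypothesis edge_ineq : forall e, 0 <= - x (src e) + x (dst e) + y e.

Lemma walk_potential_drop u w p : is_walk src dst u w p -> x u - x w <= \sum_(e <- p) y e.
Proof.
elim: p u => [|e p IH] u /=; first by move=> /eqP->; rewrite big_nil subrr.
case/andP=> /eqP src_e /IH drop_p; rewrite big_cons.
by have := edge_ineq e; rewrite src_e; lra.
Qed.

Lemma walk_heavy_edge u w p : is_walk src dst u w p -> 1 <= x u - x w ->
  exists2 e, e \in p & 1 <= (size p)%:R * y e.
Proof.
move=> walk_p /le_trans/(_ (walk_potential_drop walk_p)).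
case: p {walk_p} => [|e0 p]; first by rewrite big_nil ler10.
case: (@arg_maxP _ _ _ e0 (mem (e0 :: p)) y (mem_head _ _)) => e e_p max_e sum_ge1.
exists e => //; apply: le_trans sum_ge1 _.
rewrite mulr_natl -[y e *+ _]iter_addr_0 -count_predT -big_const_seq.
by rewrite big_seq [X in _ <= X]big_seq; apply: ler_sum => e' /max_e.
Qed.

End WalkPotential.

Section Feasible.
Variables (R : realFieldType) (s t : V) (x : V -> R) (y : E -> R).
Hypothesis feas : relax_feasible src dst s t x y.

Lemma feasible_st_path_size_gt0 p : simple_path src dst s t p -> (0 < size p)%N.
Proof.
case: p => // /andP[/eqP st_eq _]; have [_ [+ _]] := feas.
by rewrite st_eq subrr ler10.
Qed.

Lemma feasible_level_cut L : (forall p, simple_path src dst s t p -> (size p <= L)%N) ->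
  is_st_cut src dst s t [set e | L%:R^-1 <= y e].
Proof.
have [edge_ineq [st_drop y_ge0]] := feas.
move=> L_bound p p_st; have [e e_p heavy_e] := walk_heavy_edge edge_ineq (andP p_st).1 st_drop.
apply/hasP; exists e; rewrite // inE.
have L_gt0 : (0 < L)%N := leq_trans (feasible_st_path_size_gt0 p_st) (L_bound p p_st).
rewrite -[_^-1]mulr1 ler_pdivrMl ?ltr0n //; apply: le_trans heavy_e _.
by apply: ler_wpM2r => //; rewrite ler_nat L_bound.
Qed.

End Feasible.

Section FirstCut.
Variables (R : realFieldType) (s t : V) (xs : V -> R) (ys : E -> R).
Variables (sigma : 'I_#|E| -> E) (i0 : 'I_#|E|).
Hypotheses (sigma_bij : bijective sigma)
  (sigma_sorted : forall i j : 'I_#|E|, (i <= j)%N -> ys (sigma j) <= ys (sigma i))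
  (i0_first : forall j : 'I_#|E|, (j < i0)%N ->
      ~ is_st_cut src dst s t [set e | ys (sigma j) <= ys e]).

Local Notation theta := (ys (sigma i0)).

(* The last position [j] whose value still reaches [c] already gives a cut, so [i0 <= j]. *)
Lemma first_cut_level_ge c q : simple_path src dst s t q ->
  is_st_cut src dst s t [set e | c <= ys e] -> c <= theta.
Proof.
move=> q_st cut_c; have [g _ gK] := sigma_bij.
have /hasP[e0 _] := cut_c q q_st; rewrite inE -[e0]gK => c_e0.
case: (@arg_maxnP _ _ (fun j => c <= ys (sigma j)) val c_e0) => j c_j j_max.
suff : ~~ (j < i0)%N by rewrite -leqNgt => /sigma_sorted; apply: le_trans.
apply/negP => /i0_first; apply; apply: st_cut_superset cut_c _.
by apply/subsetP => e; rewrite !inE -{1 2}[e]gK => /j_max /sigma_sorted.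
Qed.

Hypothesis feas : relax_feasible src dst s t xs ys.

Lemma first_cut_gt0 q : simple_path src dst s t q -> 0 < theta.
Proof.
move=> q_st; have V_bound p : simple_path src dst s t p -> (size p <= #|V|)%N.
  by move/simple_path_size_lt/ltnW.
apply: lt_le_trans (first_cut_level_ge q_st (feasible_level_cut feas V_bound)).
by rewrite invr_gt0 ltr0n (leq_ltn_trans _ (simple_path_size_lt q_st)).
Qed.

Lemma first_cut_inv_le L q : simple_path src dst s t q ->
  (forall p, simple_path src dst s t p -> (size p <= L)%N) -> theta^-1 <= L%:R.
Proof.
move=> q_st L_bound; have size_q_gt0 := feasible_st_path_size_gt0 feas q_st.
have L_gt0 : 0 < L%:R :> R by rewrite ltr0n (leq_trans size_q_gt0) ?L_bound.
rewrite -[L%:R]invrK lef_pV2 ?posrE ?invr_gt0 ?(first_cut_gt0 q_st) //.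
exact: first_cut_level_ge q_st (feasible_level_cut feas L_bound).
Qed.

End FirstCut.

End Graph.

Unset Implicit Arguments.
Theorem lemma9 (R : realFieldType) (V E : finType) (src dst : E -> V) (s t : V)
  (f : {set E} -> R)
  (f_norm : normalized f) (f_nonneg : nonneg_setfun f)
  (f_mono : monotone_setfun f) (f_sub : submodular f)
  (Cstar : {set E})
  (Cstar_cut : is_st_cut src dst s t Cstar)
  (Cstar_min : forall C, is_st_cut src dst s t C -> f Cstar <= f C)
  (xs : V -> R) (ys : E -> R)
  (opt_feas : relax_feasible src dst s t xs ys)
  (opt_min : forall x y, relax_feasible src dst s t x y -> lovasz f ys <= lovasz f y)
  (xs01 : forall v, 0 <= xs v <= 1) (ys01 : forall e, 0 <= ys e <= 1)
  (sigma : 'I_#|E| -> E) (sigma_bij : bijective sigma)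
  (sigma_sorted : forall i j : 'I_#|E|, (i <= j)%N -> ys (sigma j) <= ys (sigma i))
  (i0 : 'I_#|E|)
  (i0_cut : is_st_cut src dst s t [set e | ys (sigma i0) <= ys e])
  (i0_first : forall j : 'I_#|E|, (j < i0)%N ->
      ~ is_st_cut src dst s t [set e | ys (sigma j) <= ys e])
  (Chat : {set E})
  (Chat_sub : Chat \subset [set e | ys (sigma i0) <= ys e])
  (Chat_min : is_min_st_cut src dst s t Chat) :
  let theta := ys (sigma i0) in
  f Chat <= theta^-1 * f Cstar /\
  forall Pmax : seq E, is_longest_st_path src dst s t Pmax ->
    theta^-1 * f Cstar <= (size Pmax)%:R * f Cstar /\
    (size Pmax)%:R * f Cstar <= (#|V| - 1)%:R * f Cstar.
Proof.
move=> theta; split.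
- have [->|Chat_n0] := eqVneq Chat set0.
    by rewrite f_norm mulr_ge0 ?invr_ge0 //; case/andP: (ys01 (sigma i0)).
  have [q q_st] : exists q, simple_path src dst s t q.
    apply: not_all_not_ex => no_path; apply: (Chat_min.2 set0); first by rewrite proper0.
    by move=> p /no_path.
  have theta_gt0 : 0 < theta := first_cut_gt0 sigma_bij sigma_sorted i0_first opt_feas q_st.
  have lovasz_le : lovasz f ys <= f Cstar.
    rewrite -(lovasz_indicator Cstar f_norm).
    exact: opt_min (st_cut_relax_feasible R Cstar_cut).
  rewrite -(ler_pM2l theta_gt0) mulrA mulfV ?gt_eqF // mul1r.
  apply: le_trans lovasz_le; apply: le_trans (lovasz_level_le f_nonneg f_mono theta_gt0).
  by rewrite ler_pM2l // f_mono.
- move=> Pmax [Pmax_st Pmax_longest]; split; apply: (ler_wpM2r (f_nonneg Cstar)).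
  + exact (first_cut_inv_le sigma_bij sigma_sorted i0_first opt_feas Pmax_st Pmax_longest).
  + by rewrite ler_nat; have := simple_path_size_lt Pmax_st; lia.
Qed.
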